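(* Let $(V,d,k,q)$ be an instance of the individually fair $k$-center with outliers problem (IF$k$CO) as defined in the context, let $l\ge0$ be an integer, and let $(S,O,\sigma)$ be the solution output by the refined algorithm (Algorithm 3) described in the context, run with parameter $l$. Then $$\alpha(S,O,\sigma)=\max_{i\in V\setminus O}\frac{d_{\sigma(i)i}}{NR_q(i)}\le 2.$$
   Context: IF$k$CO instance: a finite set $V$ with $|V|=n$, a metric $d$ on $V$ (nonnegative, symmetric, $d_{ii}=0$, triangle inequality), and integers $k\ge 1$ and $q\ge 0$. For $i\in V$, $NR_q(i)$ is the distance from $i$ to its $\lceil (n-q)/k\rceil$-th nearest neighbor in $V$, where $i$ counts as its own (first) nearest neighbor. A solution is $(S,O,\sigma)$ with $S,O\subseteq V$ and $\sigma:V\setminus O\to S$; its outlier-related fairness ratio is $\alpha(S,O,\sigma)=\max_{i\in V\setminus O} d_{\sigma(i)i}/NR_q(i)$. For $\beta>0$, procedure $A(\beta)$: set $P:=V$, $S:=\emptyset$; while $P\ne\emptyset$ and $|S|<k$: pick $s\in P$ minimizing $NR_q(i)$ over $i\in P$, set $S:=S\cup\{s\}$, $P:=\{i\in P: d_{is}>\beta\, NR_q(i)\}$; finally set $O:=P$ and let $\sigma(i)$ be a nearest center in $S$ for each $i\in V\setminus O$. Algorithm 2 is $A(2)$. Algorithm 3 (input: instance and integer $l\ge0$): compute $(S,O,\sigma):=$ output of Algorithm 2; set $t:=0$, $\beta_1:=1$, $\beta_2:=2$, $\beta:=\beta_1$. While $t<l$: run $A(\beta)$ obtaining $(S_\beta,O_\beta,\sigma_\beta)$;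 if $|O_\beta|>q$, set $\beta_1:=\beta$; if $|O_\beta|\le q$, set $(S,O,\sigma):=(S_\beta,O_\beta,\sigma_\beta)$ and $\beta_2:=\beta$; in either case then set $\beta:=(\beta_1+\beta_2)/2$ and $t:=t+1$. Output $(S,O,\sigma)$. *)

From HB Require Import structures.
From mathcomp Require Import all_boot all_order all_algebra.
Set Implicit Arguments. Unset Strict Implicit. Unset Printing Implicit Defensive.
Import Order.TTheory GRing.Theory Num.Theory.
Local Open Scope ring_scope.

Section IFkCO.
Variables (R : realFieldType) (V : finType) (d : V -> V -> R) (k q : nat).

Definition is_metric : Prop :=
  [/\ forall i j, 0 <= d i j,
      forall i j, d i j = d j i,
      forall i, d i i = 0
    & forall i j l, d i l <= d i j + d j l].

(* m = ceil((n - q)/k), n = |V| (truncated at 0 if q >= n) *)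
Definition nr_rank : nat := ((#|V| - q) + k.-1) %/ k.

(* NR_q(i): distance from i to its m-th nearest neighbour (i itself being the
   first one): the m-th smallest entry (1-based) of the multiset {d i j | j in V}. *)
Definition NR (i : V) : R :=
  nth 0 (sort <=%R [seq d i j | j <- enum V]) nr_rank.-1.

(* a solution (S, O, sigma); sigma is only meaningful on V \ O *)
Record solution := Sol { solS : {set V}; solO : {set V}; solsig : V -> V }.

(* outlier-related fairness ratio: max over i in V \ O of d_{sigma(i) i}/NR_q(i)
   (all terms are nonnegative, so 0 is a neutral default for the empty max) *)
Definition alpha (s : solution) : R :=
  \big[Num.max/0]_(i in ~: solO s) (d (solsig s i) i / NR i).

(* Procedure A(beta), as a (nondeterministic: ties) relation on runs.
   A state is (P, S). *)
Inductive A_reach (beta : R) : {set V} -> {set V} -> Prop :=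
| A_init : A_reach beta [set: V] set0
| A_step P S s :
    A_reach beta P S -> P != set0 -> (#|S| < k)%N ->
    s \in P -> (forall i, i \in P -> NR s <= NR i) ->
    A_reach beta [set i in P | beta * NR i < d i s] (s |: S).

Definition A_out (beta : R) (sol : solution) : Prop :=
  [/\ A_reach beta (solO sol) (solS sol),
      (solO sol == set0) || (k <= #|solS sol|)%N
    & forall i, i \notin solO sol ->
        solsig sol i \in solS sol /\
        (forall c, c \in solS sol -> d (solsig sol i) i <= d c i)].

Definition alg2_out (sol : solution) : Prop := A_out 2 sol.

(* Algorithm 3: loop states (t, beta1, beta2, beta, current solution) *)
Inductive alg3_reach (l : nat) : nat -> R -> R -> R -> solution -> Prop :=
| alg3_init sol : alg2_out sol -> alg3_reach l 0 1 2 1 sol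
| alg3_fail t b1 b2 b sol sol' :
    alg3_reach l t b1 b2 b sol -> (t < l)%N -> A_out b sol' ->
    (q < #|solO sol'|)%N ->
    alg3_reach l t.+1 b b2 ((b + b2) / 2) sol
| alg3_succ t b1 b2 b sol sol' :
    alg3_reach l t b1 b2 b sol -> (t < l)%N -> A_out b sol' ->
    (#|solO sol'| <= q)%N ->
    alg3_reach l t.+1 b1 b ((b1 + b) / 2) sol'.

Definition alg3_out (l : nat) (sol : solution) : Prop :=
  exists b1 b2 b, alg3_reach l l b1 b2 b sol.

End IFkCO.

(* A point left uncovered by A(beta) lies within beta * NR_q(i) of the center
   that removed it, and its nearest center is no farther; hence every run of
   A(beta) has fairness ratio at most beta.  Algorithm 3 only ever outputs runs
   of A(beta), and its betas are midpoints of values in [1, 2]. *)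

From mathcomp Require Import all_boot all_order all_algebra.
From mathcomp Require Import lra.
Set Implicit Arguments. Unset Strict Implicit. Unset Printing Implicit Defensive.
Import Order.TTheory GRing.Theory Num.Theory.
Local Open Scope ring_scope.

Lemma midf_between (F : realFieldType) (a c x y : F) :
  a <= x <= c -> a <= y <= c -> a <= (x + y) / 2 <= c.
Proof. by move=> /andP[? ?] /andP[? ?]; apply/andP; split; lra. Qed.

Lemma ler_divr_nneg (F : realFieldType) (x y c : F) :
  0 <= x -> 0 <= c -> x <= c * y -> x / y <= c.
Proof.
move=> x_ge0 c_ge0 x_le; have [y_lt0|y_gt0|->] := ltgtP y 0.
- by apply: le_trans c_ge0; rewrite mulr_ge0_le0 // invr_le0 ltW.
- by rewrite ler_pdivrMr.
- by rewrite invr0 mulr0.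
Qed.

Section Algorithms.
Variables (R : realFieldType) (V : finType) (d : V -> V -> R) (k q : nat).

Lemma A_reach_cover beta P S : A_reach d k q beta P S ->
  forall i, i \notin P -> exists2 s, s \in S & d i s <= beta * NR d k q i.
Proof.
elim=> [|P0 S0 s _ IH _ _ _ _] i; first by rewrite in_setT.
rewrite inE negb_and => /orP[/IH[s' s'S0 le_s']|].
  by exists s' => //; rewrite in_setU1 s'S0 orbT.
by rewrite -leNgt => le_s; exists s => //; apply: setU11.
Qed.

Lemma A_out_alpha_le (beta : R) (sol : solution V) : is_metric d ->
  0 <= beta -> A_out d k q beta sol -> alpha d k q sol <= beta.
Proof.
case=> d_ge0 dC _ _ beta_ge0 [reach _ assign].
rewrite /alpha; elim/big_rec: _ => [//|i x /[!inE] iO x_le].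
rewrite ge_max x_le andbT; apply: ler_divr_nneg => //.
have [_ nearest] := assign i iO.
have [s sS le_s] := A_reach_cover reach iO.
by apply: le_trans (nearest s sS) _; rewrite dC.
Qed.

Lemma alg3_reach_inv l t b1 b2 b (sol : solution V) :
  alg3_reach d k q l t b1 b2 b sol ->
  [/\ 1 <= b1 <= 2, 1 <= b2 <= 2, 1 <= b <= 2
    & exists2 beta, 1 <= beta <= 2 & A_out d k q beta sol].
Proof.
have one_le2 : 1 <= (1 : R) <= 2 by rewrite lexx /=; lra.
have two_le2 : 1 <= (2 : R) <= 2 by rewrite lexx andbT; lra.
elim=> {t b1 b2 b sol}.
- by move=> sol sol_out; split=> //; exists 2.
- by move=> t b1 b2 b sol sol' _ [? ? ? ?] _ _ _; split=> //; apply: midf_between.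
- move=> t b1 b2 b sol sol' _ [? ? ? _] _ A_sol' _.
  by split=> //; [apply: midf_between | exists b].
Qed.

End Algorithms.

Theorem lemma6 (R : realFieldType) (V : finType) (d : V -> V -> R) (k q l : nat)
  (hd : is_metric d) (hk : (1 <= k)%N) (sol : solution V) :
  alg3_out d k q l sol -> alpha d k q sol <= 2.
Proof.
move=> [b1 [b2 [b /alg3_reach_inv[_ _ _ [beta /andP[beta_ge1 beta_le2] A_sol]]]]].
apply: le_trans beta_le2.
by apply: A_out_alpha_le A_sol => //; apply: le_trans beta_ge1.
Qed.
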